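(* Let $(F,\phi)$ be an acyclic extended representation graph for $E$, let $w\in F^0$, and let $p,q$ be paths in $F$ (of length $\ge0$) with source $w$. Then $r(p)=r(q)$ if and only if $p=q$.
   Context: $E$ is a row-finite directed graph with, for each vertex $v$ emitting an edge, a chosen special edge $e^v\in s^{-1}(v)$; other edges are nonspecial. The double graph $E_d$ has vertices $E^0$ and edges $e$ (real) and $e^*$ (ghost) for $e\in E^1$, with $s_d(e)=s(e),r_d(e)=r(e),s_d(e^* )=r(e),r_d(e^* )=s(e)$. Paths of length $0$ are vertices $w$ with $s(w)=r(w)=w$. A graph is acyclic if it contains no cycle (closed path of length $\ge1$ with pairwise distinct vertex sources). An extended representation graph for $E$ is a pair $(F,\phi)$, $F$ a directed graph, $\phi:F\to E_d$ a graph homomorphism, such that for every $w\in F^0$: (i) $w$ is a source or receives exactly one edge $f_w$; (ii) if $w$ is a source or $\phi(f_w)$ is a nonspecial real edge, $\phi$ maps $s^{-1}(w)$ bijectively onto $s_d^{-1}(\phi(w))$; (iii) if $\phi(f_w)$ is a special real edge, onto $s_d^{-1}(\phi(w))\setminus\{\phi(f_w)^*\}$; (iv) if $\phi(f_w)$ is a ghost edge, onto the ghost edges in $s_d^{-1}(\phi(w))$. *)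

From Stdlib Require Import List.
Import ListNotations.
Set Implicit Arguments.

Record graph := Graph {
  vert : Type;
  edge : Type;
  src : edge -> vert;
  rng : edge -> vert
}.
Arguments src {g} _.
Arguments rng {g} _.

Definition row_finite (E : graph) : Prop :=
  forall v : vert E, exists l : list (edge E), forall e, src e = v -> In e l.

(* Choice of special edges: sp v = Some e^v for every vertex v emitting an edge.
   An edge e is special iff it is the chosen edge e^{s(e)}. *)
Definition special_choice (E : graph) (sp : vert E -> option (edge E)) : Prop :=
  (forall v e, sp v = Some e -> src e = v) /\
  (forall v, (exists e, src e = v) -> sp v <> None).

Definition is_special (E : graph) (sp : vert E -> option (edge E)) (e : edge E) : Prop :=
  sp (src e) = Some e.
Arguments is_special {E} sp e.

(* The double graph E_d: real edges inl e, ghost edges inr e = e^*. *)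
Definition dsrc (E : graph) (x : edge E + edge E) : vert E :=
  match x with inl e => src e | inr e => rng e end.
Definition drng (E : graph) (x : edge E + edge E) : vert E :=
  match x with inl e => rng e | inr e => src e end.
Arguments dsrc {E} x.
Arguments drng {E} x.
Definition double (E : graph) : graph := Graph (@dsrc E) (@drng E).

Definition is_ghost (E : graph) (x : edge E + edge E) : Prop :=
  match x with inl _ => False | inr _ => True end.
Arguments is_ghost {E} x.

Definition graph_hom (F G : graph) (phi0 : vert F -> vert G) (phi1 : edge F -> edge G) : Prop :=
  forall f, src (phi1 f) = phi0 (src f) /\ rng (phi1 f) = phi0 (rng f).

Definition bij_onto (F G : graph) (phi1 : edge F -> edge G) (w : vert F)
    (T : edge G -> Prop) : Prop :=
  (forall f, src f = w -> T (phi1 f)) /\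
  (forall f g, src f = w -> src g = w -> phi1 f = phi1 g -> f = g) /\
  (forall x, T x -> exists f, src f = w /\ phi1 f = x).

Definition ext_rep_graph (E : graph) (sp : vert E -> option (edge E)) (F : graph)
    (phi0 : vert F -> vert E) (phi1 : edge F -> edge E + edge E) : Prop :=
  @graph_hom F (double E) phi0 phi1 /\
  forall w : vert F,
    ((forall f, rng f <> w) \/ (exists f, rng f = w /\ forall g, rng g = w -> g = f)) /\
    ((forall f, rng f <> w) ->
       @bij_onto F (double E) phi1 w (fun x => dsrc x = phi0 w)) /\
    (forall f, rng f = w ->
       (forall e, phi1 f = inl e -> ~ is_special sp e ->
          @bij_onto F (double E) phi1 w (fun x => dsrc x = phi0 w)) /\
       (forall e, phi1 f = inl e -> is_special sp e ->
          @bij_onto F (double E) phi1 w (fun x => dsrc x = phi0 w /\ x <> inr e)) /\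
       (forall e, phi1 f = inr e ->
          @bij_onto F (double E) phi1 w (fun x => dsrc x = phi0 w /\ is_ghost x))).

(* Paths: a path with source v is a list of edges e1 ... en with
   s(e1) = v and r(ei) = s(e(i+1)); the empty list is the length-0 path v. *)
Fixpoint is_path (F : graph) (v : vert F) (l : list (edge F)) : Prop :=
  match l with
  | [] => True
  | e :: l' => src e = v /\ @is_path F (rng e) l'
  end.

Fixpoint path_rng (F : graph) (v : vert F) (l : list (edge F)) : vert F :=
  match l with
  | [] => v
  | e :: l' => @path_rng F (rng e) l'
  end.

Arguments is_path {F} v l.
Arguments path_rng {F} v l.

Definition is_cycle (F : graph) (v : vert F) (l : list (edge F)) : Prop :=
  is_path v l /\ l <> [] /\ path_rng v l = v /\ NoDup (map (@src F) l).

Arguments is_cycle {F} v l.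
Definition acyclic (F : graph) : Prop := forall v l, ~ @is_cycle F v l.
Arguments special_choice {E} sp.
Arguments ext_rep_graph {E} sp {F} phi0 phi1.

From Stdlib Require Import List ListDec Classical Wf_nat Lia.
Import ListNotations.

(* Only condition (i) and acyclicity matter.  By (i) every vertex of [F]
   receives at most one edge, so two paths with the same range agree edge by
   edge from the end until one of them is exhausted; what is left of the other
   is a closed path at [w].  A nonempty closed path contains a cycle (cut it
   at a repeated source), so in an acyclic graph the leftover is empty. *)

Lemma map_not_NoDup_split {A B : Type} (f : A -> B) (l : list A) :
  ~ NoDup (map f l) ->
  exists l1 x l2 y l3, l = l1 ++ x :: l2 ++ y :: l3 /\ f x = f y.
Proof.
  intro Hdup.
  destruct (not_NoDup (fun b b' => classic (b = b')) Hdup)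
    as (b & m1 & m2 & m3 & Hm).
  destruct (map_eq_app _ _ _ _ Hm) as (l1 & r1 & -> & _ & Hr1).
  destruct (map_eq_cons _ _ Hr1) as (x & r2 & -> & Hx & Hr2).
  destruct (map_eq_app _ _ _ _ Hr2) as (l2 & r3 & -> & _ & Hr3).
  destruct (map_eq_cons _ _ Hr3) as (y & l3 & -> & Hy & _).
  exists l1, x, l2, y, l3; split; congruence.
Qed.

Section Paths.

Variable F : graph.

Lemma is_path_app (v : vert F) (l1 l2 : list (edge F)) :
  is_path v (l1 ++ l2) <-> is_path v l1 /\ is_path (path_rng v l1) l2.
Proof.
  revert v; induction l1 as [|e l1 IH]; intro v; simpl.
  - tauto.
  - rewrite IH; tauto.
Qed.

Lemma path_rng_app (v : vert F) (l1 l2 : list (edge F)) :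
  path_rng v (l1 ++ l2) = path_rng (path_rng v l1) l2.
Proof.
  revert v; induction l1 as [|e l1 IH]; intro v; simpl; auto.
Qed.

Lemma closed_path_has_cycle (v : vert F) (l : list (edge F)) :
  is_path v l -> l <> [] -> path_rng v l = v ->
  exists (v' : vert F) l', is_cycle v' l'.
Proof.
  remember (length l) as n eqn:Hn; revert v l Hn.
  induction n as [n IH] using lt_wf_ind; intros v l Hn Hp Hne Hcl.
  destruct (classic (NoDup (map (@src F) l))) as [Hnd|Hdup].
  { exists v, l; repeat split; assumption. }
  destruct (map_not_NoDup_split _ _ Hdup) as (l1 & e & l2 & e' & l3 & -> & Hs).
  apply is_path_app in Hp as [_ [_ Hp]].
  apply is_path_app in Hp as [Hp2 [He' _]].
  (* [e :: l2] returns to [src e] since [src e' = src e]. *)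
  apply (IH (length (e :: l2))) with (v := src e) (l := e :: l2).
  - subst n; rewrite length_app; simpl; rewrite length_app; simpl; lia.
  - reflexivity.
  - split; auto.
  - discriminate.
  - simpl; congruence.
Qed.

Lemma acyclic_closed_path_nil (v : vert F) (l : list (edge F)) :
  acyclic F -> is_path v l -> path_rng v l = v -> l = [].
Proof.
  intros Hac Hp Hcl.
  destruct l as [|e l]; [reflexivity|].
  exfalso.
  destruct (closed_path_has_cycle _ _ Hp ltac:(discriminate) Hcl) as (v' & l' & Hc).
  exact (Hac v' l' Hc).
Qed.

Hypothesis rng_inj : forall e f : edge F, rng e = rng f -> e = f.
Hypothesis closed_path_nil :
  forall (v : vert F) l, is_path v l -> path_rng v l = v -> l = [].

Lemma path_eq_of_path_rng_eq (w : vert F) (p q : list (edge F)) :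
  is_path w p -> is_path w q -> path_rng w p = path_rng w q -> p = q.
Proof.
  revert q; induction p as [|e p IH] using rev_ind; intros q Hp Hq Hpq;
    induction q as [|f q _] using rev_ind.
  - reflexivity.
  - symmetry; apply (closed_path_nil _ _ Hq); symmetry; exact Hpq.
  - apply (closed_path_nil _ _ Hp); exact Hpq.
  - rewrite !path_rng_app in Hpq; simpl in Hpq.
    apply rng_inj in Hpq; subst f.
    apply is_path_app in Hp as [Hp [He _]].
    apply is_path_app in Hq as [Hq [Hf _]].
    rewrite (IH q Hp Hq); congruence.
Qed.

End Paths.

Lemma ext_rep_graph_rng_inj {E : graph} {sp : vert E -> option (edge E)}
    {F : graph} {phi0 : vert F -> vert E} {phi1 : edge F -> edge E + edge E} :
  ext_rep_graph sp phi0 phi1 -> forall e f : edge F, rng e = rng f -> e = f.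
Proof.
  intros [_ Hrep] e f Hef.
  destruct (Hrep (rng f)) as [[Hsource|[g [_ Hg]]] _].
  - exfalso; exact (Hsource f eq_refl).
  - rewrite (Hg e Hef), (Hg f eq_refl); reflexivity.
Qed.

Theorem lemma5p10 (E : graph) (sp : vert E -> option (edge E))
    (F : graph) (phi0 : vert F -> vert E) (phi1 : edge F -> edge E + edge E) :
  row_finite E -> special_choice sp ->
  ext_rep_graph sp phi0 phi1 -> acyclic F ->
  forall (w : vert F) (p q : list (edge F)),
    is_path w p -> is_path w q ->
    (path_rng w p = path_rng w q <-> p = q).
Proof.
  intros _ _ Hrep Hac w p q Hp Hq; split.
  - apply path_eq_of_path_rng_eq; auto.
    + exact (ext_rep_graph_rng_inj Hrep).
    + intros v l; apply acyclic_closed_path_nil, Hac.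
  - intros ->; reflexivity.
Qed.
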